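(* Let $\beta$ be an ordered partition of $N$. The set $X^\beta=\{t_\eta w: w\in\bar W^\beta,\ \eta\in\bar P_-(w)\}\subseteq W$ is a complete set of representatives of the double coset space $\bar W\backslash W/\bar W_\beta$. Moreover $X^\beta\subseteq W^\beta$.
   Context: Fix $N\ge2$. $\bar P=\bigoplus_{i=1}^N\mathbb Z\epsilon_i$ with $(\epsilon_i,\epsilon_j)=\delta_{ij}$; $\bar R=\{\alpha_{ij}=\epsilon_i-\epsilon_j:i\ne j\}$, $\bar R_+=\{\alpha_{ij}:i<j\}$, $\alpha_i=\alpha_{i,i+1}$; $\bar P_-=\{\eta\in\bar P:(\eta,\alpha)\le0\ \forall\alpha\in\bar R_+\}$. $\bar W=\mathfrak S_N$ acts by permuting indices; $W=\bar W\ltimes\bar P$ with elements $wt_\eta$, $wt_\eta w^{-1}=t_{w(\eta)}$. Affine roots (with formal $\delta$): $R=\{\bar\alpha+k\delta\}$, $R_+=\{\bar\alpha+k\delta:\bar\alpha\in\bar R_+,k\ge0\}\cup\{-\bar\alpha+k\delta:\bar\alpha\in\bar R_+,k>0\}$, $R_-=R\setminus R_+$; $W$ acts on $R$ by $w(\bar\alpha+k\delta)=w(\bar\alpha)+k\delta$, $t_\eta(\bar\alpha+k\delta)=\bar\alpha+(k-(\eta,\bar\alpha))\delta$; $l(w)=\#(R_+\cap w^{-1}(R_-))$. An ordered partition $\beta$ of $N$ gives blocks of consecutive indices of sizes $\beta_1,\dots,\beta_r$; $\bar R_\beta=\{\alpha_{ij}:i,j\text{ in the same block}\}$, $\bar R_{\beta,+}=\bar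 R_\beta\cap\bar R_+$, $\bar W_\beta$ the subgroup generated by $s_{\alpha_i}$, $\alpha_i\in\bar R_\beta$; $W^\beta=\{w\in W:l(wu)\ge l(w)\ \forall u\in\bar W_\beta\}$, $\bar W^\beta=W^\beta\cap\bar W$. For $w\in\bar W^\beta$, $\eta_w\in\bar P_-$ is defined by $(\eta_w,\epsilon_1)=0$ and $(\eta_w,\alpha_i)=-1$ if $\alpha_i\in w(\bar R_+\setminus\bar R_{\beta,+})$, $0$ otherwise ($1\le i\le N-1$); $\bar P_-(w)=\{\eta+\eta_w:\eta\in\bar P_-\}$. *)

From mathcomp Require Import all_boot all_order fingroup perm all_algebra.
Set Implicit Arguments. Unset Strict Implicit. Unset Printing Implicit Defensive.
Import GRing.Theory Num.Theory.

(* Elements of W: a pair (w, eta) stands for the element  w t_eta.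
   A permutation w acts on indices; w(eps_i) = eps_(w i), so
   (w eta)_j = eta_(w^-1 j). *)
Definition Wt (N : nat) := ({perm 'I_N} * {ffun 'I_N -> int})%type.

(* (w1 t_e1)(w2 t_e2) = (w1 o w2) t_(w2^-1 e1 + e2);
   note: in mathcomp, (s * t)%g x = t (s x), so w1 o w2 = (w2 * w1)%g. *)
Definition mulW N (x y : Wt N) : Wt N :=
  ((y.1 * x.1)%g, [ffun j => (x.2 (y.1 j) + y.2 j)%R]).

Definition embW N (w : {perm 'I_N}) : Wt N := (w, [ffun => 0%R]).

(* t_eta w = w t_(w^-1 eta) *)
Definition tw N (eta : {ffun 'I_N -> int}) (w : {perm 'I_N}) : Wt N :=
  (w, [ffun j => eta (w j)]).

(* Affine roots: (i, j, k) with i != j stands for eps_i - eps_j + k delta. *)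
Definition aroot N := ('I_N * 'I_N * int)%type.

Definition is_root N (a : aroot N) : bool := a.1.1 != a.1.2.

Definition pos_root N (a : aroot N) : bool :=
  is_root a && (((a.1.1 < a.1.2)%N && (0 <= a.2)%R) ||
                ((a.1.2 < a.1.1)%N && (0 < a.2)%R)).

(* action of w t_eta: t_eta(alpha_ij + k delta) = alpha_ij + (k - (eta_i - eta_j)) delta,
   then w(alpha_ij + k delta) = alpha_(w i, w j) + k delta *)
Definition actW N (x : Wt N) (a : aroot N) : aroot N :=
  (x.1 a.1.1, x.1 a.1.2, (a.2 - (x.2 a.1.1 - x.2 a.1.2))%R).

Definition inv_root N (x : Wt N) (a : aroot N) : bool :=
  pos_root a && ~~ pos_root (actW x a).

Definition is_length N (x : Wt N) (n : nat) : Prop :=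
  exists s : seq (aroot N),
    [/\ uniq s, forall a, (a \in s) = inv_root x a & size s = n].

Definition le_length N (x y : Wt N) : Prop :=
  exists n m, [/\ is_length x n, is_length y m & (n <= m)%N].

(* Ordered partition beta = [b_1; ...; b_r] of N: blocks of consecutive indices.
   block beta i = index (0-based) of the block containing the (0-based) index i. *)
Definition block (beta : seq nat) (i : nat) : nat :=
  find (fun s => (i < s)%N) (scanl addn 0 beta).

Definition same_block (beta : seq nat) (i j : nat) : bool :=
  block beta i == block beta j.

Definition ordered_partition (N : nat) (beta : seq nat) : Prop :=
  all (fun b => (0 < b)%N) beta /\ sumn beta = N.

Definition Wbar_beta N (beta : seq nat) : {set {perm 'I_N}} :=
  <<[set tperm p.1 p.2 | p : 'I_N * 'I_N &
       (val p.2 == (val p.1).+1) && same_block beta p.1 p.2]>>%g.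

Definition in_Wbeta N (beta : seq nat) (x : Wt N) : Prop :=
  forall u, u \in Wbar_beta N beta -> le_length x (mulW x (embW u)).

Definition in_Wbar_beta_min N (beta : seq nat) (w : {perm 'I_N}) : Prop :=
  in_Wbeta beta (embW w).

Definition antidominant N (eta : {ffun 'I_N -> int}) : Prop :=
  forall i j : 'I_N, (i < j)%N -> (eta i - eta j <= 0)%R.

(* alpha_i (i.e. alpha_(i,i+1)) lies in w(R-bar_+ \ R-bar_(beta,+)) *)
Definition simple_in_image N (beta : seq nat) (w : {perm 'I_N}) (i i1 : 'I_N) : bool :=
  [exists a : 'I_N, exists b : 'I_N,
     [&& (a < b)%N, ~~ same_block beta a b, w a == i & w b == i1]].

(* e = eta_w : (e, eps_1) = 0 and (e, alpha_i) = -1 or 0 as prescribed *)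
Definition is_eta_w N (beta : seq nat) (w : {perm 'I_N}) (e : {ffun 'I_N -> int}) : Prop :=
  antidominant e /\
  (forall i : 'I_N, val i = 0%N -> e i = 0%R) /\
  (forall i i1 : 'I_N, val i1 = (val i).+1 ->
     (e i - e i1)%R = (if simple_in_image beta w i i1 then (-1)%R else 0%R)).

Definition in_Pminus_w N (beta : seq nat) (w : {perm 'I_N}) (eta : {ffun 'I_N -> int}) : Prop :=
  exists e, is_eta_w beta w e /\ antidominant [ffun j => (eta j - e j)%R].

Definition in_Xbeta N (beta : seq nat) (y : Wt N) : Prop :=
  exists w eta, [/\ in_Wbar_beta_min beta w, in_Pminus_w beta w eta & y = tw eta w].

Definition in_dcoset N (beta : seq nat) (x y : Wt N) : Prop :=
  exists v u, u \in Wbar_beta N beta /\ x = mulW (embW v) (mulW y (embW u)).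

(* Encode x = w t_mu as the pair (w, mu).  Right multiplication by u in
   W-bar_beta turns mu into mu o u while left multiplication by W-bar only
   changes w, so the double coset of x is determined by mu up to permutations
   inside blocks.  Existence: some u in W-bar_beta makes mu o u nondecreasing
   on every block (it maximizes sum_j j * mu (u j), since an adjacent
   transposition removing a descent inside a block increases this sum); the
   permutation w that sorts positions by the value of mu o u, ties going to
   later blocks first, is increasing on blocks, i.e. lies in W-bar^beta, and
   eta = (mu o u) o w^-1 jumps at least at the simple roots of
   w(R_+ \ R_beta,+), i.e. lies in P_-(w).  Uniqueness: for t_eta w in X^beta
   the function eta o w is nondecreasing on blocks, hence determined by its
   double coset, and w is forced to be its sorting permutation.  Finally
   w t_mu lies in W^beta as soon as w is increasing and mu nondecreasing on
   blocks: then u^-1 maps the inversions of w t_mu injectively into those of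
   w t_mu u. *)

From mathcomp Require Import all_boot all_order fingroup perm all_algebra.
From mathcomp Require Import zify.
Set Implicit Arguments. Unset Strict Implicit. Unset Printing Implicit Defensive.
Import Order.TTheory GRing.Theory Num.Theory.

Lemma ord_succ_ind N (P : 'I_N -> Prop) (i : 'I_N) : P i ->
  (forall j j1 : 'I_N, val j1 = (val j).+1 -> i <= j -> P j -> P j1) ->
  forall j : 'I_N, i <= j -> P j.
Proof.
move=> Pi Psucc j le_ij; move: (subnK le_ij); move: (j - i) => d.
elim: d j le_ij => [|d IHd] j le_ij jE.
  by have -> : j = i by apply: val_inj; rewrite /= -jE.
have lt_dN : d + i < N by have := ltn_ord j; lia.
apply: (Psucc (Ordinal lt_dN)) => /=; [lia | lia | apply: IHd => /=; lia].
Qed.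

Lemma ord_neq N (p q : 'I_N) : (p != q) = (nat_of_ord p != nat_of_ord q).
Proof. by []. Qed.

Lemma tperm_succ_lt N (a a1 i j : 'I_N) : val a1 = (val a).+1 -> i < j ->
  (i != a) || (j != a1) -> tperm a a1 i < tperm a a1 j.
Proof.
move=> /= a1E.
by case: tpermP => [->|->|/eqP + /eqP +]; case: tpermP => [->|->|/eqP + /eqP +];
  rewrite ?eqxx ?ord_neq; lia.
Qed.

Lemma homo_perm_eq N (T : eqType) (r : rel T) : transitive r -> antisymmetric r ->
  forall (f : 'I_N -> T) (p : {perm 'I_N}),
  {homo f : i j / i <= j >-> r i j} -> {homo f \o p : i j / i <= j >-> r i j} ->
  f \o p =1 f.
Proof.
move=> r_trans r_anti f p f_homo fp_homo i.
have sorted_enum (g : 'I_N -> T) : {homo g : i j / i <= j >-> r i j} ->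
    sorted r (map g (enum 'I_N)).
  move=> g_homo; rewrite sorted_map.
  apply: (@sub_sorted _ (relpre (@nat_of_ord N) leq)) => [j k /g_homo //|].
  by rewrite -sorted_map val_enum_ord iota_sorted.
have p_enum : perm_eq (map p (enum 'I_N)) (enum 'I_N).
  apply: uniq_perm; rewrite ?map_inj_uniq -?enumT ?enum_uniq //; first exact: perm_inj.
  by move=> j; rewrite mem_enum; apply/mapP; exists ((p^-1)%g j); rewrite ?mem_enum ?permKV.
have : map (f \o p) (enum 'I_N) = map f (enum 'I_N).
  apply: (sorted_eq r_trans r_anti); rewrite ?sorted_enum // map_comp.
  exact: perm_map.
by move/eq_in_map/(_ i); rewrite mem_enum; apply.
Qed.

Section PermHomo.
Variables (N : nat) (r : rel 'I_N).
Hypotheses (r_irr : irreflexive r) (r_trans : transitive r)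
  (r_total : forall a b, a != b -> r a b || r b a).

Lemma perm_homo_exists : exists w : {perm 'I_N}, {homo w : a b / r a b >-> a < b}.
Proof.
have rank_lt a : #|[pred c | r c a]| < N.
  rewrite -[N in _ < N]card_ord; apply: proper_card; apply/properP.
  by split; [apply/subsetP | exists a; rewrite ?inE ?r_irr].
pose rank a := Ordinal (rank_lt a).
have rank_homo : {homo rank : a b / r a b >-> a < b}.
  move=> a b r_ab; apply: proper_card; apply/properP; split.
    by apply/subsetP => c; rewrite !inE => /r_trans; apply.
  by exists a; rewrite !inE ?r_irr.
have rank_inj : injective rank.
  move=> a b rank_ab; apply/eqP; apply: contraT => /r_total /orP [] /rank_homo;
  by rewrite rank_ab ltnn.
by exists (perm rank_inj) => a b /rank_homo; rewrite !permE.
Qed.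

Lemma perm_homo_unique (w w' : {perm 'I_N}) :
  {homo w : a b / r a b >-> a < b} -> {homo w' : a b / r a b >-> a < b} -> w = w'.
Proof.
move=> w_homo w'_homo; apply/permP => a; apply: val_inj.
have homo_ww' : {homo (@nat_of_ord N) \o (w^-1 * w')%g : i j / i <= j >-> i <= j}.
  move=> i j; rewrite leq_eqVlt => /orP [/eqP/val_inj -> //|lt_ij] /=; rewrite !permM.
  have [<-|/r_total/orP [/w'_homo/ltnW //|/w_homo]] := eqVneq ((w^-1)%g i) ((w^-1)%g j).
    by [].
  by rewrite !permKV; lia.
have := homo_perm_eq leq_trans anti_leq (fun i j => id) homo_ww' (w a).
by rewrite /= permM permK.
Qed.

End PermHomo.

Section Lengths.
Variable N : nat.
Implicit Types (x y : Wt N) (a : aroot N).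

Lemma inv_root_bound x a : inv_root x a ->
  (0 <= a.2)%R /\ (a.2 <= x.2 a.1.1 - x.2 a.1.2)%R.
Proof.
case: a => [[i j] k]; rewrite /inv_root /pos_root /is_root /actW /=.
have := inj_eq (@perm_inj _ x.1) i j; rewrite -!(inj_eq val_inj) /=.
move: (nat_of_ord i) (nat_of_ord j) (nat_of_ord (x.1 i)) (nat_of_ord (x.1 j)).
by move: (x.2 i) (x.2 j) => ??????; lia.
Qed.

Lemma inv_root_enum x : exists s, uniq s /\ forall a, (a \in s) = inv_root x a.
Proof.
pose s := [seq (ij.1, ij.2, Posz k) | ij <- enum {: 'I_N * 'I_N},
             k <- iota 0 (absz (x.2 ij.1 - x.2 ij.2)).+1].
exists (undup (filter (inv_root x) s)); split=> [|a]; first exact: undup_uniq.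
rewrite mem_undup mem_filter andb_idr // => inva.
have [k_ge0 k_le] := inv_root_bound inva.
apply/allpairsPdep; exists a.1, (absz a.2); rewrite mem_enum mem_iota.
case: a k_ge0 k_le {inva} => [[i j] k] /= k_ge0 k_le.
by split=> //; [lia | rewrite gez0_abs].
Qed.

Lemma le_length_inj x y (f : aroot N -> aroot N) : injective f ->
  (forall a, inv_root x a -> inv_root y (f a)) -> le_length x y.
Proof.
move=> f_inj f_inv; have [s [s_uniq sE]] := inv_root_enum x.
have [t [t_uniq tE]] := inv_root_enum y.
exists (size s), (size t); split; [by exists s | by exists t | ].
rewrite -(size_map f); apply: uniq_leq_size; first by rewrite map_inj_uniq.
by move=> _ /mapP [a sa ->]; rewrite tE f_inv // -sE.
Qed.

Lemma not_le_length_inj x y (g : aroot N -> aroot N) a0 : injective g ->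
  (forall a, inv_root y a -> inv_root x (g a)) -> inv_root x a0 ->
  (forall a, inv_root y a -> g a != a0) -> ~ le_length x y.
Proof.
move=> g_inj g_inv inva0 g_a0 [n [m [[s [_ sE <-]] [t [t_uniq tE <-]] le_st]]].
have : size (a0 :: map g t) <= size s.
  apply: uniq_leq_size => [|b].
    rewrite /= map_inj_uniq // t_uniq andbT; apply/mapP => -[a ta /esym/eqP].
    by rewrite (negbTE (g_a0 a _)) // -tE.
  by rewrite inE sE => /predU1P [-> //|/mapP [a ta ->]]; rewrite g_inv // -tE.
by rewrite /= size_map; lia.
Qed.

End Lengths.

Section DoubleCosets.
Variable beta : seq nat.
Local Notation blk := (block beta).

Lemma block_mono : {homo blk : i j / i <= j}.
Proof. by move=> i j le_ij; apply: sub_find => s /=; lia. Qed.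

Lemma block_ltW i j : blk i < blk j -> i < j.
Proof. by apply: contraTT; rewrite -!leqNgt; apply: block_mono. Qed.

Variable N : nat.

Definition blockwise_increasing (w : {perm 'I_N}) :=
  forall a b : 'I_N, a < b -> same_block beta a b -> w a < w b.

Definition blockwise_nondecreasing (mu : 'I_N -> int) :=
  forall a b : 'I_N, a <= b -> same_block beta a b -> (mu a <= mu b)%R.

Lemma same_block_chain (r : rel 'I_N) : transitive r ->
  (forall a a1 : 'I_N, val a1 = (val a).+1 -> same_block beta a a1 -> r a a1) ->
  forall a b : 'I_N, a < b -> same_block beta a b -> r a b.
Proof.
move=> r_trans r_succ a b lt_ab; move: b {lt_ab}(ltnW lt_ab) (lt_ab).
apply: ord_succ_ind; first by rewrite ltnn.
move=> j j1 j1E le_aj IHj lt_aj1 /eqP blk_a_j1.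
have blk_j : blk j = blk a.
  have le_j_j1 : j <= j1 by rewrite j1E.
  by have := block_mono le_aj; have := block_mono le_j_j1; lia.
have r_j_j1 : r j j1 by apply: r_succ; rewrite // /same_block blk_j blk_a_j1.
case: (ltngtP a j) => [lt_aj|lt_ja|eq_aj]; [|lia|by rewrite (val_inj eq_aj)].
by apply: r_trans r_j_j1; apply: IHj; rewrite // /same_block blk_j.
Qed.

Lemma Wbar_beta_block u : u \in Wbar_beta N beta -> forall k, blk (u k) = blk k.
Proof.
move=> /gen_prodgP [n [c c_gen ->]].
elim/big_ind: _ => [k|s t IHs IHt k|i _ k]; first by rewrite perm1.
  by rewrite permM IHt IHs.
have /imsetP [[p q] /=] := c_gen i; rewrite inE /= => /andP [_ /eqP blk_pq] ->.
by case: tpermP => [->|->|].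
Qed.

Lemma tperm_Wbar_beta (p q : 'I_N) : val q = (val p).+1 -> same_block beta p q ->
  tperm p q \in Wbar_beta N beta.
Proof.
move=> qE pq_blk; apply/mem_gen/imsetP; exists (p, q) => //.
by rewrite inE /= pq_blk qE eqxx.
Qed.

Lemma in_Wbeta_blockwise w (mu : {ffun 'I_N -> int}) :
  blockwise_increasing w -> blockwise_nondecreasing mu -> in_Wbeta beta (w, mu).
Proof.
move=> w_incr mu_nondecr u u_in.
have blk_uV k : blk ((u^-1)%g k) = blk k by apply: Wbar_beta_block; rewrite groupV.
apply: (@le_length_inj _ _ _ (fun a => ((u^-1)%g a.1.1, (u^-1)%g a.1.2, a.2))).
  by move=> [[i j] k] [[i' j'] k'] /= [/perm_inj -> /perm_inj -> ->].
move=> [[i j] k] /andP [pos_ijk not_pos_w]; rewrite /inv_root /=.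
have -> : actW (mulW (w, mu) (embW u)) ((u^-1)%g i, (u^-1)%g j, k) = actW (w, mu) (i, j, k).
  by rewrite /actW /mulW /embW /= !permM !ffunE !addr0 !permKV.
rewrite not_pos_w andbT.
move: pos_ijk not_pos_w; rewrite /pos_root /is_root /actW /= !(inj_eq perm_inj).
case/andP=> ij; rewrite ij /=.
have [lt_ij|lt_ji] : i < j \/ j < i by move: ij; rewrite ord_neq; lia.
- have [blk_lt|blk_eq] : blk i < blk j \/ blk i = blk j.
    by have := block_mono (ltnW lt_ij); lia.
  + by have := @block_ltW (u^-1 i)%g (u^-1 j)%g; rewrite !blk_uV; lia.
  + have := w_incr i j lt_ij (introT eqP blk_eq).
    by have := mu_nondecr i j (ltnW lt_ij) (introT eqP blk_eq); lia.
- by have := ij; rewrite -(inj_eq (@perm_inj _ (u^-1)%g)) !ord_neq; lia.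
Qed.

Lemma Wbar_beta_min_succ w : in_Wbar_beta_min beta w ->
  forall a a1 : 'I_N, val a1 = (val a).+1 -> same_block beta a a1 -> w a < w a1.
Proof.
move=> w_min a a1 /= a1E blk_aa1; rewrite ltnNge leq_eqVlt; apply/negP.
case/orP=> [/eqP/val_inj/perm_inj a1_a|lt_w]; first by move: a1E; rewrite a1_a; lia.
have a_a1 : nat_of_ord a != nat_of_ord a1 by lia.
apply: (@not_le_length_inj _ _ _ (fun b => (tperm a a1 b.1.1, tperm a a1 b.1.2, b.2))
  (a, a1, 0%R) _ _ _ _ (w_min _ (tperm_Wbar_beta a1E blk_aa1))).
- by move=> [[i j] k] [[i' j'] k'] /= [/perm_inj -> /perm_inj -> ->].
- move=> [[i j] k] /andP [pos_ijk]; rewrite /inv_root /=.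
  have -> : actW (mulW (embW w) (embW (tperm a a1))) (i, j, k) =
            actW (embW w) (tperm a a1 i, tperm a a1 j, k).
    by rewrite /actW /mulW /embW /= !permM !ffunE !addr0.
  move=> not_pos; rewrite not_pos andbT.
  move: pos_ijk not_pos; rewrite /pos_root /is_root /actW /= !ffunE subrr subr0.
  rewrite !(inj_eq perm_inj) !ord_neq.
  have : (nat_of_ord (tperm a a1 i) == tperm a a1 j) = (nat_of_ord i == j) :=
    inj_eq (@perm_inj _ (tperm a a1)) i j.
  case: (boolP ((i != a) || (j != a1))) => [ij_a|].
    by have := @tperm_succ_lt _ a a1 i j a1E; rewrite ij_a; lia.
  by rewrite negb_or !negbK => /andP [/eqP -> /eqP ->]; rewrite tpermL tpermR; lia.
- rewrite /inv_root /pos_root /is_root /actW /= !ffunE subrr (inj_eq perm_inj) !ord_neq.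
  by rewrite a_a1 /=; lia.
- move=> [[i j] k] /andP [pos_ijk _]; apply/negP => /eqP [si sj k0].
  move: pos_ijk; rewrite -(tpermK a a1 i) -(tpermK a a1 j) si sj tpermL tpermR k0.
  by rewrite /pos_root /is_root /= ord_neq; lia.
Qed.

Lemma Wbar_beta_minP w : in_Wbar_beta_min beta w <-> blockwise_increasing w.
Proof.
split=> [w_min|w_incr]; last by apply: in_Wbeta_blockwise => // a b _ _; rewrite !ffunE.
by apply: same_block_chain => [b a c|]; [exact: ltn_trans|exact: Wbar_beta_min_succ].
Qed.

Lemma antidominant_succ (eta : {ffun 'I_N -> int}) :
  (forall j j1 : 'I_N, val j1 = (val j).+1 -> (eta j <= eta j1)%R) -> antidominant eta.
Proof.
move=> eta_succ i j /ltnW; move: j; apply: ord_succ_ind; first by rewrite subrr.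
by move=> j j1 j1E _; have := eta_succ j j1 j1E; lia.
Qed.

Definition simple_step w (n : nat) : bool :=
  [exists i : 'I_N, exists i1 : 'I_N,
     [&& val i == n, val i1 == n.+1 & simple_in_image beta w i i1]].

Definition etaw w : {ffun 'I_N -> int} :=
  [ffun p : 'I_N => Posz (\sum_(0 <= n < p) simple_step w n)].

Lemma etaw_succ w (j j1 : 'I_N) : val j1 = (val j).+1 ->
  etaw w j1 = (etaw w j + Posz (simple_in_image beta w j j1))%R.
Proof.
move=> /= j1E; rewrite !ffunE j1E big_nat_recr // PoszD.
congr (_ + Posz (nat_of_bool _))%R.
apply/existsP/idP => [[i /existsP [i1 /and3P [/eqP iE /eqP i1E]]]|j_j1].
  have -> : j = i by apply: val_inj; rewrite iE.
  by have -> : j1 = i1 by apply: val_inj; rewrite i1E.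
by exists j; apply/existsP; exists j1; rewrite j_j1 andbT; apply/andP; split; apply/eqP.
Qed.

Lemma is_eta_w_etaw w : is_eta_w beta w (etaw w).
Proof.
split; [|split].
- by apply: antidominant_succ => j j1 /(etaw_succ w) ->; rewrite lerDl.
- by move=> i i0; rewrite ffunE i0 big_geq.
- move=> i i1 /(etaw_succ w) ->.
  by case: simple_in_image; rewrite ?addr0 ?subrr // opprD addNKr.
Qed.

Lemma in_Pminus_wP w (eta : {ffun 'I_N -> int}) : in_Pminus_w beta w eta <->
  antidominant eta /\ forall p p1 : 'I_N, val p1 = (val p).+1 ->
    simple_in_image beta w p p1 -> (eta p < eta p1)%R.
Proof.
split=> [[e [[e_anti [_ e_succ]] eta_e_anti]]|[eta_anti eta_succ]].
  split=> [i j lt_ij|p p1 p1E simple_p].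
    have := e_anti i j lt_ij; have := eta_e_anti i j lt_ij; rewrite !ffunE.
    lia.
  have := e_succ p p1 p1E; rewrite simple_p.
  have lt_pp1 : p < p1 by move: p1E => /= ->.
  by have := eta_e_anti p p1 lt_pp1; rewrite !ffunE; lia.
exists (etaw w); split; first exact: is_eta_w_etaw.
apply: antidominant_succ => j j1 j1E; move: (etaw_succ w j1E); rewrite !ffunE.
have lt_jj1 : j < j1 by move: j1E => /= ->.
have := eta_anti j j1 lt_jj1; have := eta_succ j j1 j1E.
by case: simple_in_image => [/(_ isT)|_]; lia.
Qed.

Lemma antidominant_mono (eta : {ffun 'I_N -> int}) : antidominant eta ->
  forall i j : 'I_N, i <= j -> (eta i <= eta j)%R.
Proof.
move=> eta_anti i j; rewrite leq_eqVlt => /orP [/eqP/val_inj -> //|lt_ij].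
by have := eta_anti i j lt_ij; lia.
Qed.

Lemma Xbeta_blockwise_nondecreasing w (eta : {ffun 'I_N -> int}) :
  in_Wbar_beta_min beta w -> in_Pminus_w beta w eta ->
  blockwise_nondecreasing (fun j => eta (w j)).
Proof.
move=> /Wbar_beta_minP w_incr /in_Pminus_wP [/antidominant_mono eta_mono _] a b.
rewrite leq_eqVlt => /orP [/eqP/val_inj -> //|lt_ab] blk_ab.
exact/eta_mono/ltnW/w_incr.
Qed.

Lemma in_Xbeta_Wbeta (y : Wt N) : in_Xbeta beta y -> in_Wbeta beta y.
Proof.
move=> [w [eta [w_min eta_P ->]]]; apply: in_Wbeta_blockwise.
  exact/Wbar_beta_minP.
by move=> a b le_ab blk_ab; rewrite !ffunE; apply: Xbeta_blockwise_nondecreasing.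
Qed.

(* Ties in [mu] go to the later block first: [eta] in [P_-(w)] must increase
   strictly where [w] passes from an earlier block to a later one. *)
Definition key_lt (mu : 'I_N -> int) : rel 'I_N := fun a b =>
  (mu a < mu b)%R || (mu a == mu b) && ((blk b < blk a) || (blk a == blk b) && (a < b)).

Lemma key_lt_irr mu : irreflexive (key_lt mu).
Proof. by move=> a; rewrite /key_lt; lia. Qed.

Lemma key_lt_trans mu : transitive (key_lt mu).
Proof. by move=> b a c; rewrite /key_lt; lia. Qed.

Lemma key_lt_total mu a b : a != b -> key_lt mu a b || key_lt mu b a.
Proof. by rewrite /key_lt ord_neq; lia. Qed.

Lemma not_simple_block w (p p1 : 'I_N) : val p1 = (val p).+1 ->
  ~~ simple_in_image beta w p p1 -> blk ((w^-1)%g p1) <= blk ((w^-1)%g p).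
Proof.
move=> /= p1E not_simple; set a := (w^-1)%g p; set b := (w^-1)%g p1.
case: (ltngtP a b) => [lt_ab|lt_ba|ab].
- rewrite leqNgt; apply: contra not_simple => lt_blk.
  apply/existsP; exists a; apply/existsP; exists b.
  by rewrite lt_ab /same_block neq_ltn lt_blk !permKV !eqxx.
- exact: block_mono (ltnW lt_ba).
- by move: p1E; rewrite -(permKV w p) -(permKV w p1) -/a -/b (val_inj ab); lia.
Qed.

Lemma Pminus_w_plateau_block w (eta : {ffun 'I_N -> int}) : in_Pminus_w beta w eta ->
  forall p q : 'I_N, p <= q -> eta p = eta q -> blk ((w^-1)%g q) <= blk ((w^-1)%g p).
Proof.
move=> /in_Pminus_wP [/antidominant_mono eta_mono eta_succ] p.
apply: ord_succ_ind => [//|j j1 j1E le_pj IHj eta_pj1].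
have le_jj1 : j <= j1 by move: j1E => /= ->.
have eta_pj : eta p = eta j.
  by have := eta_mono _ _ le_pj; have := eta_mono _ _ le_jj1; lia.
apply: leq_trans (IHj eta_pj); apply: (not_simple_block j1E).
by apply/negP => /(eta_succ _ _ j1E); lia.
Qed.

Lemma Xbeta_key_homo w (eta : {ffun 'I_N -> int}) :
  in_Wbar_beta_min beta w -> in_Pminus_w beta w eta ->
  {homo w : a b / key_lt (fun j => eta (w j)) a b >-> a < b}.
Proof.
move=> /Wbar_beta_minP w_incr eta_P a b key_ab; rewrite ltnNge; apply/negP => le_ba.
have /in_Pminus_wP [/antidominant_mono eta_mono _] := eta_P.
case/orP: key_ab => [|/andP [/eqP mu_ab /orP [blk_ba|/andP [/eqP blk_ab lt_ab]]]].
- by have := eta_mono _ _ le_ba; lia.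
- by have := Pminus_w_plateau_block eta_P le_ba (esym mu_ab); rewrite !permK; lia.
- by have := w_incr a b lt_ab (introT eqP blk_ab); lia.
Qed.

Definition lexle (x y : nat * int) : bool := (x.1 < y.1) || (x.1 == y.1) && (x.2 <= y.2)%R.

Lemma lexle_trans : transitive lexle.
Proof. by move=> [a b] [c d] [e f]; rewrite /lexle /=; lia. Qed.

Lemma lexle_anti : antisymmetric lexle.
Proof. by move=> [a b] [c d]; rewrite /lexle /= => le_abcd; congr (_, _); lia. Qed.

Lemma blockwise_nondecreasing_lexle mu : blockwise_nondecreasing mu ->
  {homo (fun j : 'I_N => (blk j, mu j)) : i j / i <= j >-> lexle i j}.
Proof.
move=> mu_nondecr i j le_ij; rewrite /lexle /=.
have := block_mono le_ij; rewrite leq_eqVlt => /orP [blk_ij|-> //].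
by rewrite blk_ij mu_nondecr ?orbT.
Qed.

Lemma blockwise_sorted_perm_eq (mu : 'I_N -> int) u : u \in Wbar_beta N beta ->
  blockwise_nondecreasing mu -> blockwise_nondecreasing (mu \o u) ->
  forall j, mu (u j) = mu j.
Proof.
move=> u_in mu_nondecr mu_u_nondecr j.
have fu_homo : {homo (fun j : 'I_N => (blk j, mu j)) \o u : i k / i <= k >-> lexle i k}.
  move=> i k le_ik /=; rewrite !(Wbar_beta_block u_in).
  exact: (blockwise_nondecreasing_lexle mu_u_nondecr).
have := homo_perm_eq lexle_trans lexle_anti (blockwise_nondecreasing_lexle mu_nondecr)
  fu_homo j.
by case.
Qed.

Lemma Xbeta_dcoset_inj (y y' : Wt N) : in_Xbeta beta y -> in_Xbeta beta y' ->
  in_dcoset beta y' y -> y = y'.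
Proof.
move=> [w [eta [w_min eta_P ->]]] [w' [eta' [w'_min eta'_P ->]]] [v [u [u_in y'E]]].
have mu'E j : eta' (w' j) = eta (w (u j)).
  have := congr1 (fun z : Wt N => z.2 j) y'E.
  by rewrite /tw /mulW /embW /= !ffunE add0r addr0.
have mu_u : forall j, eta (w (u j)) = eta (w j).
  apply: blockwise_sorted_perm_eq u_in (Xbeta_blockwise_nondecreasing w_min eta_P) _.
  move=> a b le_ab blk_ab; rewrite /= -!mu'E.
  exact: (Xbeta_blockwise_nondecreasing w'_min eta'_P).
pose mu j := eta (w j).
have w'_homo : {homo w' : a b / key_lt mu a b >-> a < b}.
  move=> a b; rewrite /key_lt /mu -(mu_u a) -(mu_u b) -!mu'E.
  exact: (Xbeta_key_homo w'_min eta'_P).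
have ww' : w = w' :=
  perm_homo_unique (@key_lt_total mu) (Xbeta_key_homo w_min eta_P) w'_homo.
rewrite -ww' in mu'E *; congr (_, _); apply/ffunP => j; rewrite !ffunE.
by rewrite mu'E mu_u.
Qed.

Lemma tperm_succ_sum_gt (nu : 'I_N -> int) (h : {perm 'I_N}) (a a1 : 'I_N) :
  val a1 = (val a).+1 -> (nu (h a1) < nu (h a))%R ->
  (\sum_(j : 'I_N) Posz j * nu (h j) <
   \sum_(j : 'I_N) Posz j * nu ((tperm a a1 * h)%g j))%R.
Proof.
move=> /= a1E lt_nu; have a1_a : a1 != a by rewrite ord_neq a1E; lia.
have sum_split (G : 'I_N -> int) : (\sum_j G j =
    G a + G a1 + \sum_(j | (j != a) && (j != a1)) G j)%R.
  by rewrite (bigD1 a) // (bigD1 a1) //= addrA.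
rewrite !sum_split !permM tpermL tpermR.
rewrite [X in (_ < _ + X)%R](eq_bigr (fun j : 'I_N => Posz j * nu (h j))%R); last first.
  by move=> j /andP [j_a j_a1]; rewrite permM tpermD // eq_sym.
rewrite ltrD2r a1E; move: lt_nu; move: (nu (h a)) (nu (h a1)) (nat_of_ord a) => x y n.
nia.
Qed.

Lemma Wbar_beta_sorting_exists (nu : 'I_N -> int) :
  exists2 h, h \in Wbar_beta N beta & blockwise_nondecreasing (fun j => nu (h j)).
Proof.
pose Phi h := (\sum_(j : 'I_N) Posz j * nu (h j))%R.
case: (@arg_maxP _ _ _ 1%g (mem (Wbar_beta N beta)) Phi (group1 _)) => h h_in Phi_max.
exists h => // a b; rewrite leq_eqVlt => /orP [/eqP/val_inj -> //|]; move: a b.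
apply: (@same_block_chain (fun a b => nu (h a) <= nu (h b))%R) => [b a c|a a1 a1E blk_aa1].
  exact: le_trans.
rewrite leNgt; apply/negP => lt_nu.
have := Phi_max _ (groupM (tperm_Wbar_beta a1E blk_aa1) h_in).
by rewrite /= /Phi leNgt tperm_succ_sum_gt.
Qed.

Lemma Xbeta_of_blockwise_nondecreasing (mu : 'I_N -> int) : blockwise_nondecreasing mu ->
  exists w : {perm 'I_N},
    in_Wbar_beta_min beta w /\ in_Pminus_w beta w [ffun p => mu ((w^-1)%g p)].
Proof.
move=> mu_nondecr.
have [w w_homo] := perm_homo_exists (@key_lt_irr mu) (@key_lt_trans mu) (@key_lt_total mu).
exists w; split.
  apply/Wbar_beta_minP => a b lt_ab blk_ab; apply: w_homo.
  have := mu_nondecr a b (ltnW lt_ab) blk_ab; move: blk_ab; rewrite /key_lt /same_block.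
  lia.
apply/in_Pminus_wP; split=> [p q lt_pq|p p1 /= p1E].
  rewrite !ffunE; case: (boolP (key_lt mu ((w^-1)%g q) ((w^-1)%g p))) => [/w_homo|].
    by rewrite !permKV; lia.
  by rewrite /key_lt; lia.
case/existsP=> a /existsP [b /and4P [lt_ab blk_ab /eqP wa /eqP wb]].
rewrite !ffunE -wa -wb !permK.
case: (boolP (key_lt mu b a)) => [/w_homo|]; first by rewrite wa wb p1E; lia.
by have := block_mono (ltnW lt_ab); move: blk_ab; rewrite /key_lt /same_block; lia.
Qed.

Lemma Xbeta_meets_dcoset (x : Wt N) : exists y, in_Xbeta beta y /\ in_dcoset beta x y.
Proof.
case: x => [w0 nu].
have [h h_in mu_nondecr] := Wbar_beta_sorting_exists nu.
have [w [w_min eta_P]] := Xbeta_of_blockwise_nondecreasing mu_nondecr.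
set eta := [ffun p => nu (h ((w^-1)%g p))] in eta_P.
exists (tw eta w); split; first by exists w, eta.
exists ((w^-1) * h * w0)%g, (h^-1)%g; split; first by rewrite groupV.
rewrite /mulW /embW /tw /=; congr (_, _); first by rewrite !mulgA mulgK mulVg mul1g.
by apply/ffunP => j; rewrite !ffunE add0r addr0 permK permKV.
Qed.
End DoubleCosets.

Theorem proposition2p13 (N : nat) (HN : (2 <= N)%N) (beta : seq nat)
  (Hbeta : ordered_partition N beta) :
  (forall x : Wt N, exists y, in_Xbeta beta y /\ in_dcoset beta x y) /\
  (forall y y' : Wt N, in_Xbeta beta y -> in_Xbeta beta y' ->
     in_dcoset beta y' y -> y = y') /\
  (forall y : Wt N, in_Xbeta beta y -> in_Wbeta beta y).
Proof.
split; first exact: Xbeta_meets_dcoset.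
by split; [exact: Xbeta_dcoset_inj | exact: in_Xbeta_Wbeta].
Qed.
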